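(* Let $M,N\in\Lambda^{001}$ with $M\longrightarrow_\beta^\infty N$. Then there exist terms $M_0,M_1,M_2,\ldots\in\Lambda^{001}$ such that $M_0=M$ and, for every $d\in\mathbf N$, $$M_0\longrightarrow_{\beta\ge 0}^* M_1\longrightarrow_{\beta\ge1}^* M_2\longrightarrow_{\beta\ge2}^*\cdots\longrightarrow_{\beta\ge d-1}^* M_d \longrightarrow_{\beta\ge d}^\infty N.$$
   Context: Fix a set $\mathcal V$ of variables. A 001-infinitary λ-term is a possibly infinite tree built from variables $x\in\mathcal V$, abstractions $\lambda x.M$ and applications $(M)N$ ($N$ the argument), such that every infinite branch enters infinitely often the argument position of an application node; $\Lambda^{001}$ is the set of such terms, up to α-equivalence, with fresh variables always available. $M[N/x]$ denotes capture-avoiding substitution. One-step β-reduction $\longrightarrow_\beta$ is the contextual closure (finite derivations) of $(\lambda x.M)N\longrightarrow_\beta M[N/x]$; $\longrightarrow_\beta^*$ is its reflexive-transitive closure. The infinitary reduction $\longrightarrow_\beta^\infty$ is defined by the rules below, where derivations may be infinite provided every infinite branch passes infinitely often through the third premise of (@): (var) $M\longrightarrow_\beta^* x\Rightarrow M\longrightarrow_\beta^\infty x$; (λ) $M\longrightarrow_\beta^*\lambda x.P$ and $P\longrightarrow_\beta^\infty P'$ $\Rightarrow M\longrightarrow_\beta^\infty\lambda x.P'$; (@) $M\longrightarrow_\beta^*(P)Q$, $P\longrightarrow_\beta^\infty P'$, $Q\longrightarrow_\beta^\infty Q'$ $\Rightarrow M\longrightarrow_\beta^\infty(P')Q'$.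 Min-depth reduction: $\longrightarrow_{\beta\ge0}$ is $\longrightarrow_\beta$; for $d\ge0$, $\longrightarrow_{\beta\ge d+1}$ is defined inductively by: $M\longrightarrow_{\beta\ge d+1}N\Rightarrow\lambda x.M\longrightarrow_{\beta\ge d+1}\lambda x.N$; $M\longrightarrow_{\beta\ge d+1}N\Rightarrow(M)P\longrightarrow_{\beta\ge d+1}(N)P$; $M\longrightarrow_{\beta\ge d}N\Rightarrow(P)M\longrightarrow_{\beta\ge d+1}(P)N$ (i.e. contraction of a redex whose path from the root crosses at least $d+1$ argument positions). $\longrightarrow_{\beta\ge d}^*$ is its reflexive-transitive closure. Min-depth infinitary reduction: $\longrightarrow_{\beta\ge0}^\infty$ is $\longrightarrow_\beta^\infty$; for $d\ge1$, $\longrightarrow_{\beta\ge d}^\infty$ is defined inductively (finite derivations) by: $x\longrightarrow_{\beta\ge d}^\infty x$; $M\longrightarrow_{\beta\ge d}^\infty M'\Rightarrow\lambda x.M\longrightarrow_{\beta\ge d}^\infty\lambda x.M'$; ($M\longrightarrow_{\beta\ge d}^\infty M'$ and $N\longrightarrow_{\beta\ge d-1}^\infty N'$) $\Rightarrow (M)N\longrightarrow_{\beta\ge d}^\infty(M')N'$. *)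

(* Infinitary lambda-terms up to alpha-equivalence, represented
   with de Bruijn indices as a coinductive type (possibly infinite trees). *)
From Stdlib Require Import Arith.

CoInductive term : Type :=
| Var : nat -> term
| Lam : term -> term
| App : term -> term -> term.   (* App M N = (M)N, N the argument *)

CoInductive bisim : term -> term -> Prop :=
| bisim_var n : bisim (Var n) (Var n)
| bisim_lam M M' : bisim M M' -> bisim (Lam M) (Lam M')
| bisim_app M M' N N' : bisim M M' -> bisim N N' -> bisim (App M N) (App M' N').

Inductive dir : Type := DLam | DFun | DArg.

Definition child (d : dir) (t : term) : option term :=
  match d, t with
  | DLam, Lam M => Some M
  | DFun, App M _ => Some M
  | DArg, App _ N => Some N
  | _, _ => None
  end.

Fixpoint follow (t : term) (b : nat -> dir) (n : nat) : option term :=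
  match n with
  | 0 => Some t
  | S n' => match child (b 0) t with
            | Some t' => follow t' (fun k => b (S k)) n'
            | None => None
            end
  end.

Definition is_branch (t : term) (b : nat -> dir) : Prop :=
  forall n, follow t b n <> None.

Definition is001 (t : term) : Prop :=
  forall b, is_branch t b -> forall n, exists m, n <= m /\ b m = DArg.

CoFixpoint lift (c : nat) (t : term) : term :=
  match t with
  | Var n => if n <? c then Var n else Var (S n)
  | Lam M => Lam (lift (S c) M)
  | App M N => App (lift c M) (lift c N)
  end.

(* subst k Nk t : replaces index k by Nk (already lifted k times) and
   decrements the free indices above k. *)
CoFixpoint subst (k : nat) (Nk : term) (t : term) : term :=
  match t with
  | Var n => if n <? k then Var n else if n =? k then Nk else Var (pred n)
  | Lam M => Lam (subst (S k) (lift 0 Nk) M)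
  | App M N => App (subst k Nk M) (subst k Nk N)
  end.

(* M[N/x] where x is the variable bound by the abstraction *)
Definition subst0 (N M : term) : term := subst 0 N M.

Inductive beta : term -> term -> Prop :=
| beta_redex M N P : bisim P (subst0 N M) -> beta (App (Lam M) N) P
| beta_lam M M' : beta M M' -> beta (Lam M) (Lam M')
| beta_appl M M' N N' : beta M M' -> bisim N N' -> beta (App M N) (App M' N')
| beta_appr M M' N N' : bisim M M' -> beta N N' -> beta (App M N) (App M' N').

Inductive star (R : term -> term -> Prop) : term -> term -> Prop :=
| star_refl M N : bisim M N -> star R M N
| star_step M N P : R M N -> star R N P -> star R M P.

(* ---------- infinitary beta reduction ->_beta^infty ----------
   Mixed inductive/coinductive definition: the (var), (lam) rules and the
   first two premises of (@) are inductive, the third premise of (@) (the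
   argument position) is coinductive.  [inf_rules R] is the inductive part
   with the argument premise in R; [infred] is the greatest fixed point. *)
Inductive inf_rules (R : term -> term -> Prop) : term -> term -> Prop :=
| inf_var M x : star beta M (Var x) -> inf_rules R M (Var x)
| inf_lam M P P' : star beta M (Lam P) -> inf_rules R P P' ->
    inf_rules R M (Lam P')
| inf_app M P Q P' Q' : star beta M (App P Q) -> inf_rules R P P' -> R Q Q' ->
    inf_rules R M (App P' Q').

Definition infred (M N : term) : Prop :=
  exists R : term -> term -> Prop,
    (forall A B, R A B -> inf_rules R A B) /\ R M N.

Inductive beta_ge : nat -> term -> term -> Prop :=
| bge_0 M N : beta M N -> beta_ge 0 M N
| bge_lam d M M' : beta_ge (S d) M M' -> beta_ge (S d) (Lam M) (Lam M')
| bge_appl d M M' N N' : beta_ge (S d) M M' -> bisim N N' ->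
    beta_ge (S d) (App M N) (App M' N')
| bge_appr d M M' N N' : bisim M M' -> beta_ge d N N' ->
    beta_ge (S d) (App M N) (App M' N').

Inductive infred_ge : nat -> term -> term -> Prop :=
| ige_0 M N : infred M N -> infred_ge 0 M N
| ige_var d x : infred_ge (S d) (Var x) (Var x)
| ige_lam d M M' : infred_ge (S d) M M' -> infred_ge (S d) (Lam M) (Lam M')
| ige_app d M M' N N' : infred_ge (S d) M M' -> infred_ge d N N' ->
    infred_ge (S d) (App M N) (App M' N').

(* A derivation of M ->^oo N is inductive everywhere except below argument
   positions.  Hence above depth 1 it only involves finitely many finite
   reductions; performing them gives M ->* M1 with M1 ->^oo_{>=1} N.  The same
   argument applied inside the argument subterms splits M_d ->^oo_{>=d} N into
   M_d ->*_{>=d} M_{d+1} ->^oo_{>=d+1} N, and dependent choice yields the whole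
   sequence.  Each M_d is a 001-term because 001-terms are closed under
   substitution, hence under finite beta-reduction. *)

From Stdlib Require Import Arith Lia Classical ClassicalEpsilon.

Definition term_frob (t : term) : term :=
  match t with Var n => Var n | Lam M => Lam M | App M N => App M N end.

Lemma term_frob_eq t : t = term_frob t.
Proof. destruct t; reflexivity. Qed.

Lemma lift_Var c n : lift c (Var n) = if n <? c then Var n else Var (S n).
Proof.
  rewrite (term_frob_eq (lift c (Var n))); simpl.
  destruct (n <? c); reflexivity.
Qed.

Lemma lift_Lam c M : lift c (Lam M) = Lam (lift (S c) M).
Proof. rewrite (term_frob_eq (lift c (Lam M))); reflexivity. Qed.

Lemma lift_App c M N : lift c (App M N) = App (lift c M) (lift c N).
Proof. rewrite (term_frob_eq (lift c (App M N))); reflexivity. Qed.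

Lemma subst_Var k u n :
  subst k u (Var n) = if n <? k then Var n else if n =? k then u else Var (pred n).
Proof.
  rewrite (term_frob_eq (subst k u (Var n))); simpl.
  destruct (n <? k); [reflexivity|].
  destruct (n =? k); [symmetry; apply term_frob_eq | reflexivity].
Qed.

Lemma subst_Lam k u M : subst k u (Lam M) = Lam (subst (S k) (lift 0 u) M).
Proof. rewrite (term_frob_eq (subst k u (Lam M))); reflexivity. Qed.

Lemma subst_App k u M N : subst k u (App M N) = App (subst k u M) (subst k u N).
Proof. rewrite (term_frob_eq (subst k u (App M N))); reflexivity. Qed.

Inductive bisim_step (R : term -> term -> Prop) : term -> term -> Prop :=
| bisim_step_var n : bisim_step R (Var n) (Var n)
| bisim_step_lam M M' : R M M' -> bisim_step R (Lam M) (Lam M')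
| bisim_step_app M M' N N' : R M M' -> R N N' -> bisim_step R (App M N) (App M' N').

Lemma bisim_coind (R : term -> term -> Prop) :
  (forall a b, R a b -> bisim_step (fun x y => R x y \/ bisim x y) a b) ->
  forall a b, R a b -> bisim a b.
Proof.
  intros HR. cofix CH. intros a b Hab.
  destruct (HR a b Hab) as [n | M M' [H|H] | M M' N N' [H1|H1] [H2|H2]];
    constructor; first [apply CH; assumption | assumption].
Qed.

Lemma bisim_refl : forall t, bisim t t.
Proof. cofix CH; destruct t; constructor; apply CH. Qed.

Lemma bisim_sym : forall t u, bisim t u -> bisim u t.
Proof. cofix CH; intros t u H; destruct H; constructor; apply CH; assumption. Qed.

Lemma bisim_trans t u v : bisim t u -> bisim u v -> bisim t v.
Proof.
  intros H1 H2.
  apply (bisim_coind (fun a c => exists b, bisim a b /\ bisim b c)); [|eauto].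
  clear. intros a c [b [H1 H2]].
  destruct H1; inversion H2; subst; constructor; left; eauto.
Qed.

Lemma lift_bisim c t t' : bisim t t' -> bisim (lift c t) (lift c t').
Proof.
  intros H.
  apply (bisim_coind (fun a b => exists c t t',
           a = lift c t /\ b = lift c t' /\ bisim t t')); [|eauto 6].
  clear. intros a b [c [t [t' [-> [-> H]]]]].
  destruct H.
  - rewrite lift_Var. destruct (n <? c); constructor.
  - rewrite !lift_Lam. constructor. left; eauto 6.
  - rewrite !lift_App. constructor; left; eauto 6.
Qed.

Lemma subst_bisim k u u' t t' :
  bisim t t' -> bisim u u' -> bisim (subst k u t) (subst k u' t').
Proof.
  intros H Hu.
  apply (bisim_coind (fun a b => exists k u u' t t',
           a = subst k u t /\ b = subst k u' t' /\ bisim t t' /\ bisim u u'));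
    [|eauto 10].
  clear. intros a b [k [u [u' [t [t' [-> [-> [H Hu]]]]]]]].
  destruct H.
  - rewrite !subst_Var. destruct (n <? k); [constructor|].
    destruct (n =? k); [|constructor].
    destruct Hu; constructor; right; assumption.
  - rewrite !subst_Lam. constructor. left.
    exists (S k), (lift 0 u), (lift 0 u'), M, M'.
    auto using lift_bisim.
  - rewrite !subst_App. constructor; left; eauto 10.
Qed.

Lemma beta_bisim_l A B C : bisim A B -> beta B C -> beta A C.
Proof.
  intros HA H. revert A HA.
  induction H; intros A HA; inversion HA; subst.
  - match goal with H : bisim _ (Lam _) |- _ => inversion H; subst end.
    apply beta_redex. eapply bisim_trans; [eassumption|].
    apply bisim_sym, subst_bisim; assumption.
  - apply beta_lam; auto.
  - apply beta_appl; eauto using bisim_trans.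
  - apply beta_appr; eauto using bisim_trans.
Qed.

Lemma star_mono (R1 R2 : term -> term -> Prop) :
  (forall a b, R1 a b -> R2 a b) -> forall a b, star R1 a b -> star R2 a b.
Proof.
  intros H a b Hs; induction Hs; [apply star_refl | eapply star_step]; eauto.
Qed.

Lemma star_trans (R : term -> term -> Prop) :
  (forall A B C, bisim A B -> R B C -> R A C) ->
  forall A B C, star R A B -> star R B C -> star R A C.
Proof.
  intros HR A B C H; revert C; induction H as [A B HAB|]; intros C H2.
  - destruct H2.
    + apply star_refl. eapply bisim_trans; eauto.
    + eapply star_step; [eapply HR|]; eauto.
  - eapply star_step; eauto.
Qed.

Lemma star_beta_lam M M' : star beta M M' -> star beta (Lam M) (Lam M').
Proof.
  induction 1; [apply star_refl; constructor | eapply star_step; [apply beta_lam|]];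
    eauto.
Qed.

Lemma star_beta_appl M M' N : star beta M M' -> star beta (App M N) (App M' N).
Proof.
  induction 1.
  - apply star_refl; constructor; auto using bisim_refl.
  - eapply star_step; [apply beta_appl|]; eauto using bisim_refl.
Qed.

Lemma star_beta_ge_lam d M M' :
  star (beta_ge (S d)) M M' -> star (beta_ge (S d)) (Lam M) (Lam M').
Proof.
  induction 1; [apply star_refl; constructor | eapply star_step; [apply bge_lam|]];
    eauto.
Qed.

Lemma star_beta_ge_app d M M' N N' :
  star (beta_ge (S d)) M M' -> star (beta_ge d) N N' ->
  star (beta_ge (S d)) (App M N) (App M' N').
Proof.
  intros HM HN. induction HM.
  - induction HN in M, N0, H |- *.
    + apply star_refl; constructor; assumption.
    + eapply star_step; [apply bge_appr; eassumption|].
      apply IHHN, bisim_refl.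
  - eapply star_step; [apply bge_appl; eauto using bisim_refl | assumption].
Qed.

Lemma beta_ge_beta d M N : beta_ge d M N -> beta M N.
Proof. induction 1; [assumption | constructor ..]; assumption. Qed.

(** * Splitting off the top of an infinitary reduction *)

Lemma inf_rules_split R :
  (forall A B, R A B -> inf_rules R A B) ->
  forall M N, inf_rules R M N -> exists M', star beta M M' /\ infred_ge 1 M' N.
Proof.
  intros HR M N H; induction H as [M x|M P P' HM _ [P1 [HP1 HP1']]
                                  |M P Q P' Q' HM _ [P1 [HP1 HP1']] HQ].
  - exists (Var x); split; [assumption | apply ige_var].
  - exists (Lam P1); split.
    + eapply star_trans; [exact beta_bisim_l | eassumption | apply star_beta_lam; assumption].
    + apply ige_lam; assumption.
  - exists (App P1 Q); split.
    + eapply star_trans; [exact beta_bisim_l | eassumption | apply star_beta_appl; assumption].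
    + apply ige_app; [assumption|]. apply ige_0. exists R; auto.
Qed.

Lemma infred_ge_split d M N :
  infred_ge d M N -> exists M', star (beta_ge d) M M' /\ infred_ge (S d) M' N.
Proof.
  induction 1 as [M N [R [HR HMN]] | d x | d M M' _ [M1 [H1 H2]]
                 | d M M' N N' _ [M1 [H1 H2]] _ [N1 [H3 H4]]].
  - destruct (inf_rules_split R HR M N (HR _ _ HMN)) as [M1 [H1 H2]].
    exists M1; split; [|assumption].
    eapply star_mono; [|exact H1]. apply bge_0.
  - exists (Var x); split; [apply star_refl, bisim_refl | apply ige_var].
  - exists (Lam M1); split; [apply star_beta_ge_lam | apply ige_lam]; assumption.
  - exists (App M1 N1); split; [apply star_beta_ge_app | apply ige_app]; assumption.
Qed.

(** * 001-terms *)

Inductive spine (P : term -> Prop) : term -> Prop :=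
| spine_var n : spine P (Var n)
| spine_lam M : spine P M -> spine P (Lam M)
| spine_app M N : spine P M -> P N -> spine P (App M N).

Lemma spine_mono (P Q : term -> Prop) :
  (forall t, P t -> Q t) -> forall t, spine P t -> spine Q t.
Proof. intros H t Ht; induction Ht; constructor; auto. Qed.

(* The greatest fixed point of [spine], a coinductive form of [is001]. *)
Definition guarded (t : term) : Prop :=
  exists P : term -> Prop, (forall u, P u -> spine P u) /\ P t.

Lemma guarded_spine t : guarded t -> spine guarded t.
Proof.
  intros [P [HP Ht]]. apply spine_mono with P; [|auto].
  intros u Hu; exists P; auto.
Qed.

Lemma spine_guarded t : spine guarded t -> guarded t.
Proof.
  intros H. exists (spine guarded). split; [|assumption].
  intros u Hu. apply spine_mono with guarded; [apply guarded_spine | assumption].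
Qed.

Lemma guarded_coind (P : term -> Prop) :
  (forall u, P u -> spine (fun v => P v \/ guarded v) u) ->
  forall t, P t -> guarded t.
Proof.
  intros H t Ht. exists (fun v => P v \/ guarded v). split; [|left; assumption].
  intros u [Hu|Hu]; [auto|].
  apply spine_mono with guarded; [auto | apply guarded_spine; assumption].
Qed.

Lemma guarded_bisim t u : bisim t u -> guarded t -> guarded u.
Proof.
  intros Hb Hg. apply (guarded_coind (fun u => exists t, bisim t u /\ guarded t));
    [|eauto].
  clear. intros u [t [Hb Hg]]. apply guarded_spine in Hg.
  induction Hg in u, Hb |- *; inversion Hb; subst; constructor; eauto.
Qed.

Lemma guarded_lift c t : guarded t -> guarded (lift c t).
Proof.
  intros Hg. apply (guarded_coind (fun u => exists c t, u = lift c t /\ guarded t));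
    [|eauto].
  clear. intros u [c [t [-> Hg]]]. apply guarded_spine in Hg.
  induction Hg in c |- *.
  - rewrite lift_Var. destruct (n <? c); constructor.
  - rewrite lift_Lam. constructor. auto.
  - rewrite lift_App. constructor; eauto.
Qed.

Lemma guarded_subst k u t : guarded t -> guarded u -> guarded (subst k u t).
Proof.
  intros Hg Hu.
  apply (guarded_coind (fun v => exists k u t, v = subst k u t /\ guarded t /\ guarded u));
    [|eauto 6].
  clear. intros v [k [u [t [-> [Hg Hu]]]]]. apply guarded_spine in Hg.
  induction Hg in k, u, Hu |- *.
  - rewrite subst_Var. destruct (n <? k); [constructor|].
    destruct (n =? k); [|constructor].
    apply spine_mono with guarded; [auto | apply guarded_spine; assumption].
  - rewrite subst_Lam. constructor. apply IHHg, guarded_lift; assumption.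
  - rewrite subst_App. constructor; [auto | left; eauto 6].
Qed.

Lemma guarded_beta M N : beta M N -> guarded M -> guarded N.
Proof.
  induction 1 as [M N P HP | M M' _ IH | M M' N N' _ IH HN | M M' N N' HM _ IH];
    intros Hg; apply guarded_spine in Hg; inversion Hg; subst.
  - match goal with H : spine _ (Lam _) |- _ => inversion H; subst end.
    eapply guarded_bisim; [apply bisim_sym; exact HP|].
    apply guarded_subst; [apply spine_guarded|]; assumption.
  - apply spine_guarded. constructor. apply guarded_spine, IH, spine_guarded; assumption.
  - apply spine_guarded. constructor.
    + apply guarded_spine, IH, spine_guarded; assumption.
    + eapply guarded_bisim; eassumption.
  - apply spine_guarded. constructor; [|auto].
    apply guarded_spine. eapply guarded_bisim; [exact HM|].
    apply spine_guarded; assumption.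
Qed.

Lemma guarded_star M N : star beta M N -> guarded M -> guarded N.
Proof.
  induction 1; intros Hg; [eapply guarded_bisim | apply IHstar; eapply guarded_beta];
    eassumption.
Qed.

Lemma follow_add n t b u : follow t b n = Some u ->
  forall k, follow t b (n + k) = follow u (fun j => b (n + j)) k.
Proof.
  induction n in t, b |- *; simpl; intros Hf k.
  - injection Hf as <-; reflexivity.
  - destruct (child (b 0) t); [|discriminate].
    apply (IHn _ (fun k => b (S k)) Hf k).
Qed.

Lemma spine_follow n t b u : spine guarded t -> follow t b n = Some u -> spine guarded u.
Proof.
  induction n in t, b |- *; simpl; intros H Hf.
  - congruence.
  - destruct (child (b 0) t) as [t'|] eqn:E; [|discriminate].
    apply IHn with t' (fun k => b (S k)); [|assumption].
    destruct (b 0), t; simpl in E; try discriminate; injection E as <-;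
      inversion H; subst; auto using guarded_spine.
Qed.

Lemma is_branch_shift t b t' : is_branch t b -> child (b 0) t = Some t' ->
  is_branch t' (fun k => b (S k)).
Proof.
  intros Hb Hc n. specialize (Hb (S n)). simpl in Hb. rewrite Hc in Hb. exact Hb.
Qed.

Lemma spine_branch_arg t : spine guarded t ->
  forall b, is_branch t b -> exists m, b m = DArg.
Proof.
  induction 1 as [n | M _ IH | M N _ IH _]; intros b Hb;
    destruct (b 0) eqn:E; try (exists 0; assumption);
    try (exfalso; apply (Hb 1); simpl; rewrite E; reflexivity);
    (destruct (IH (fun k => b (S k))) as [m Hm];
     [eapply is_branch_shift; [eassumption | rewrite E; reflexivity]
     | exists (S m); exact Hm]).
Qed.

Lemma guarded_is001 t : guarded t -> is001 t.
Proof.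
  intros Hg b Hb n. apply guarded_spine in Hg.
  destruct (follow t b n) as [u|] eqn:E; [|exfalso; exact (Hb n E)].
  destruct (spine_branch_arg u (spine_follow n t b u Hg E) (fun j => b (n + j)))
    as [m Hm].
  - intros k. rewrite <- (follow_add n t b u E k). apply Hb.
  - exists (n + m). split; [lia | exact Hm].
Qed.

Lemma is001_child t d t' : is001 t -> child d t = Some t' -> is001 t'.
Proof.
  intros H Hc b Hb n.
  set (b' := fun k => match k with 0 => d | S k => b k end).
  assert (Hb' : is_branch t b').
  { intros [|k]; simpl; [discriminate|]. unfold b'. rewrite Hc. exact (Hb k). }
  destruct (H b' Hb' (S n)) as [[|m] [Hm1 Hm2]]; [lia|].
  exists m; split; [lia | exact Hm2].
Qed.

Definition spine_child (t : term) : term :=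
  match t with Lam M => M | App M _ => M | Var n => Var n end.

Fixpoint spine_at (k : nat) (t : term) : term :=
  match k with 0 => t | S k => spine_at k (spine_child t) end.

Definition spine_dir (t : term) (j : nat) : dir :=
  match spine_at j t with Lam _ => DLam | _ => DFun end.

(* A 001-term without a finite spine whose arguments are 001: this property
   passes to the spine child, so the spine itself is an infinite branch that
   never enters an argument position. *)
Definition bad_spine (u : term) : Prop := is001 u /\ ~ spine is001 u.

Lemma bad_spine_child u :
  bad_spine u -> bad_spine (spine_child u) /\ child (spine_dir u 0) u = Some (spine_child u).
Proof.
  intros [H1 H2]. destruct u as [n|M|M N]; simpl.
  - exfalso; apply H2; constructor.
  - repeat split; [eapply is001_child with (d := DLam); eauto|].
    intros HM; apply H2; constructor; assumption.
  - repeat split; [eapply is001_child with (d := DFun); eauto|].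
    intros HM; apply H2; constructor; [assumption|].
    eapply is001_child with (d := DArg); eauto.
Qed.

Lemma follow_spine_dir k t : bad_spine t -> follow t (spine_dir t) k = Some (spine_at k t).
Proof.
  induction k in t |- *; intros Ht; [reflexivity|].
  destruct (bad_spine_child t Ht) as [H1 H2]. simpl. rewrite H2.
  apply (IHk _ H1).
Qed.

Lemma is001_spine t : is001 t -> spine is001 t.
Proof.
  intros H. apply NNPP. intros Hn.
  destruct (H (spine_dir t)) with (n := 0) as [m [_ Hm]].
  - intros k. rewrite follow_spine_dir by (split; assumption). discriminate.
  - unfold spine_dir in Hm. destruct (spine_at m t); discriminate.
Qed.

Lemma is001_guarded t : is001 t -> guarded t.
Proof.
  apply guarded_coind. intros u Hu.
  apply spine_mono with is001; [auto | apply is001_spine; assumption].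
Qed.

Lemma dependent_choice_nat (A : Type) (P : nat -> A -> Prop) (R : nat -> A -> A -> Prop) :
  (forall d x, P d x -> exists y, R d x y /\ P (S d) y) ->
  forall x0, P 0 x0 ->
  exists f : nat -> A, f 0 = x0 /\ forall d, P d (f d) /\ R d (f d) (f (S d)).
Proof.
  intros Hstep x0 Hx0.
  set (next d x := epsilon (inhabits x0) (fun y => R d x y /\ P (S d) y)).
  set (f := fix f d := match d with 0 => x0 | S d => next d (f d) end).
  assert (Hnext : forall d x, P d x -> R d x (next d x) /\ P (S d) (next d x)).
  { intros d x Hx. apply epsilon_spec, Hstep, Hx. }
  assert (HP : forall d, P d (f d)).
  { induction d; [exact Hx0 | apply Hnext, IHd]. }
  exists f. split; [reflexivity|]. intros d. split; [|apply Hnext]; apply HP.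
Qed.

Theorem mainTheorem6 (M N : term) :
  is001 M -> is001 N -> infred M N ->
  exists Ms : nat -> term,
    Ms 0 = M /\
    (forall d, is001 (Ms d)) /\
    (forall d, star (beta_ge d) (Ms d) (Ms (S d))) /\
    (forall d, infred_ge d (Ms d) N).
Proof.
  intros HM _ HMN.
  destruct (dependent_choice_nat term (fun d A => infred_ge d A N /\ guarded A)
              (fun d A B => star (beta_ge d) A B)) with (x0 := M)
    as [Ms [HMs0 HMs]].
  - intros d A [HA HgA]. destruct (infred_ge_split d A N HA) as [B [HAB HB]].
    exists B. repeat split; [assumption | assumption|].
    eapply guarded_star; [|exact HgA].
    eapply star_mono; [apply beta_ge_beta | exact HAB].
  - split; [apply ige_0; assumption | apply is001_guarded; assumption].
  - exists Ms. repeat split; [assumption | | |]; intros d;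
      [apply guarded_is001 | | ]; apply HMs.
Qed.
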